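(* Let $n\ge2$ and let $k$ be a positive integer with $k\le n-1$. For $\delta_1,\dots,\delta_{n-2}\in\{\mathsf A,\mathsf D\}$, consider $\delta=(\delta_1,\dots,\delta_{n-2},\mathsf A,\mathsf D)$ and $\delta'=(\delta_1,\dots,\delta_{n-2},\mathsf D,\mathsf A)$ in $\{\mathsf A,\mathsf D\}^n$. Then $$\mathbf{i}_\delta(\underbrace{0,\dots,0}_{n-1},k)\sim\mathbf{i}_{\delta'}(\underbrace{0,\dots,0}_{n-1},n-k-1).$$
   Context: $\mathfrak{S}_{m+1}$ is generated by $s_i=(i,i+1)$; $R(w_0^{(m+1)})$ is the set of reduced words $(i_1,\dots,i_{\bar m})\in[m]^{\bar m}$, $\bar m=m(m+1)/2$, of its longest element, with $R(w_0^{(1)})=\{\emptyset\}$. A 2-move exchanges two consecutive letters $i,j$ with $|i-j|>1$; $\mathbf{i}\sim\mathbf{i}'$ means the words are related by a sequence of 2-moves. For a word $\mathbf j$, $\mathbf j+1$ adds 1 to each letter. Extensions: for $\mathbf{i}=(i_1,\dots,i_{\bar m})\in R(w_0^{(m+1)})$ and $s\in\{0,\dots,\bar m\}$, with $\mathbf{i}^-(s)=(i_1,\dots,i_{\bar m-s})$ and $\mathbf{i}^+(s)=(i_{\bar m-s+1},\dots,i_{\bar m})$, set $E_{\mathsf D}(s)(\mathbf{i})=(\mathbf{i}^-(s),m+1,m,\dots,1,\mathbf{i}^+(s)+1)$ and $E_{\mathsf A}(s)(\mathbf{i})=(\mathbf{i}^-(s)+1,1,2,\dots,m+1,\mathbf{i}^+(s))$,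 elements of $R(w_0^{(m+2)})$. For $\delta\in\{\mathsf A,\mathsf D\}^n$ and $I=(I_1,\dots,I_n)$ with $0\le I_j\le j(j-1)/2$, define $\mathbf{i}_\delta(I)=(E_{\delta_n}(I_n)\circ\cdots\circ E_{\delta_2}(I_2)\circ E_{\delta_1}(I_1))(\emptyset)\in R(w_0^{(n+1)})$. *)

From Stdlib Require Import Relation_Operators.
From mathcomp Require Import all_boot.
Set Implicit Arguments. Unset Strict Implicit. Unset Printing Implicit Defensive.

Inductive AD : Type := A | D.

Definition two_move (w w' : seq nat) : Prop :=
  exists (a b : seq nat) (i j : nat),
    1 < (if i <= j then j - i else i - j) /\
    w = a ++ [:: i; j] ++ b /\ w' = a ++ [:: j; i] ++ b.

Definition move_equiv : seq nat -> seq nat -> Prop := @clos_refl_trans (seq nat) two_move.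

Definition barm (m : nat) : nat := (m * m.+1) %/ 2.

(* E_D(s) and E_A(s) applied to a word of R(w_0^{(m+1)}) *)
Definition ext_D (m s : nat) (w : seq nat) : seq nat :=
  take (barm m - s) w ++ rev (iota 1 m.+1) ++ map S (drop (barm m - s) w).
Definition ext_A (m s : nat) (w : seq nat) : seq nat :=
  map S (take (barm m - s) w) ++ iota 1 m.+1 ++ drop (barm m - s) w.

Definition ext (d : AD) (m s : nat) (w : seq nat) : seq nat :=
  match d with A => ext_A m s w | D => ext_D m s w end.

(* i_delta(I) = (E_{delta_n}(I_n) o ... o E_{delta_1}(I_1))(empty);
   step j (1-based) acts on a word of R(w_0^{(j)}), i.e. m = j - 1. *)
Definition iword (delta : seq AD) (I : seq nat) : seq nat :=
  foldl (fun w (p : nat * (AD * nat)) => ext p.2.1 p.1 p.2.2 w) [::]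
        (zip (iota 0 (size delta)) (zip delta I)).

From Stdlib Require Import Relation_Operators.
From mathcomp Require Import all_boot zify.

Set Implicit Arguments.
Unset Strict Implicit.
Unset Printing Implicit Defensive.

(* Write v for the word i_{delta0}(0,...,0), a = n-1-k, P = (1,...,a) and
   Q = (a+2,...,n).  Unfolding the last two extensions, the two words are
   (v+1) P rev(Q) (a+1) rev(P) Q  and  (v+1) rev(Q) P (a+1) Q rev(P).
   Every letter of P differs from every letter of Q by at least 2, so the
   first word becomes the second by commuting P past rev(Q) and rev(P)
   past Q. *)

Definition far (x y : nat) : bool := (x.+1 < y) || (y.+1 < x).

Lemma two_move_far (a b : seq nat) (x y : nat) :
  far x y -> two_move (a ++ [:: x; y] ++ b) (a ++ [:: y; x] ++ b).
Proof. by move=> xy; exists a, b, x, y; split=> //; move: xy; rewrite /far; case: ifP; lia. Qed.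

Lemma move_equiv_cat2 (a b w w' : seq nat) :
  move_equiv w w' -> move_equiv (a ++ w ++ b) (a ++ w' ++ b).
Proof.
elim=> [_ _ [a' [b' [x [y [xy [-> ->]]]]]] | u | u v t _ IHuv _ IHvt].
- by apply: rt_step; exists (a ++ a'), (b' ++ b), x, y; rewrite -!catA.
- exact: rt_refl.
- exact: rt_trans IHuv IHvt.
Qed.

Lemma move_equiv_commute1 (x : nat) (R : seq nat) :
  {in R, forall y, far x y} -> move_equiv (x :: R) (rcons R x).
Proof.
elim: R => [|y R IH] farR /=; first exact: rt_refl.
apply: (@rt_trans _ _ _ (y :: x :: R)).
  by apply: rt_step; apply: (two_move_far [::] R); apply: farR; rewrite inE eqxx.
have farR' : {in R, forall z, far x z} by move=> z zR; apply: farR; rewrite inE zR orbT.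
by have := move_equiv_cat2 [:: y] [::] (IH farR'); rewrite !cats0.
Qed.

Lemma move_equiv_commute (P R : seq nat) :
  {in P & R, forall x y, far x y} -> move_equiv (P ++ R) (R ++ P).
Proof.
elim: P => [|x P IH] farPR /=; first by rewrite cats0; exact: rt_refl.
apply: (@rt_trans _ _ _ (x :: R ++ P)).
  have farPR' : {in P & R, forall y z, far y z}.
    by move=> y z yP; apply: farPR; rewrite inE yP orbT.
  by have := move_equiv_cat2 [:: x] [::] (IH farPR'); rewrite !cats0.
rewrite -cat_rcons.
exact: (move_equiv_cat2 [::] P (move_equiv_commute1 (fun y => farPR x y (mem_head x P)))).
Qed.

Lemma move_equiv_up_down (a k : nat) :
  move_equiv (iota 1 a ++ rev (iota 1 (a + k).+1) ++ iota (a + 2) k)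
             (rev (iota (a + 2) k) ++ iota 1 (a + k).+1 ++ rev (iota 1 a)).
Proof.
have -> : iota 1 (a + k).+1 = iota 1 a ++ a.+1 :: iota (a + 2) k.
  by rewrite -addnS iotaD add1n addn2.
set P := iota 1 a; set Q := iota (a + 2) k.
have farPQ (x y : nat) : x \in P -> y \in Q -> far x y by rewrite !mem_iota /far; lia.
rewrite rev_cat rev_cons -cats1 -!catA.
apply: (@rt_trans _ _ _ (rev Q ++ P ++ [:: a.+1] ++ rev P ++ Q)).
  have farPQr : {in P & rev Q, forall x y, far x y}.
    by move=> x y xP; rewrite mem_rev; apply: farPQ.
  by have := move_equiv_cat2 [::] ([:: a.+1] ++ rev P ++ Q) (move_equiv_commute farPQr);
     rewrite -!catA.
have farPrQ : {in rev P & Q, forall x y, far x y}.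
  by move=> x y; rewrite mem_rev; apply: farPQ.
by have := move_equiv_cat2 (rev Q ++ P ++ [:: a.+1]) [::] (move_equiv_commute farPrQ);
   rewrite !cats0 -!catA.
Qed.

Lemma barmS (m : nat) : barm m.+1 = barm m + m.+1.
Proof. rewrite /barm; lia. Qed.

Lemma ext_D_cat (m s : nat) (u t : seq nat) : size t = s -> size u + s = barm m ->
  ext_D m s (u ++ t) = u ++ rev (iota 1 m.+1) ++ map S t.
Proof.
by move=> <- sizeu; rewrite /ext_D -sizeu addnK take_size_cat // drop_size_cat.
Qed.

Lemma ext_A_cat (m s : nat) (u t : seq nat) : size t = s -> size u + s = barm m ->
  ext_A m s (u ++ t) = map S u ++ iota 1 m.+1 ++ t.
Proof.
by move=> <- sizeu; rewrite /ext_A -sizeu addnK take_size_cat // drop_size_cat.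
Qed.

Lemma size_ext (d : AD) (m s : nat) (w : seq nat) : size (ext d m s w) = size w + m.+1.
Proof.
rewrite -[in RHS](cat_take_drop (barm m - s) w) size_cat.
by case: d; rewrite /= /ext_A /ext_D !size_cat ?size_map ?size_rev size_iota; lia.
Qed.

Lemma iword_rcons (delta : seq AD) (I : seq nat) (d : AD) (s : nat) :
  size delta = size I ->
  iword (rcons delta d) (rcons I s) = ext d (size delta) s (iword delta I).
Proof.
move=> sizeI; rewrite /iword size_rcons -addn1 iotaD add0n cats1.
by rewrite !zip_rcons ?foldl_rcons // size_zip size_iota sizeI minnn.
Qed.

Lemma size_iword (delta : seq AD) (I : seq nat) :
  size delta = size I -> size (iword delta I) = barm (size delta).
Proof.
elim/last_ind: delta I => [|delta d IH] I; first by case: I.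
case/lastP: I => [|I s]; rewrite !size_rcons // => -[sizeI].
by rewrite iword_rcons // size_ext IH // barmS.
Qed.

Lemma map_succ_iota (a n : nat) : map S (iota a n) = iota a.+1 n.
Proof. by rewrite -add1n iotaDl. Qed.

Lemma iword_last2 (delta : seq AD) (x y : AD) (s : nat) :
  iword (delta ++ [:: x; y]) (nseq (size delta).+1 0 ++ [:: s]) =
  ext y (size delta).+1 s (ext x (size delta) 0 (iword delta (nseq (size delta) 0))).
Proof.
have -> : nseq (size delta).+1 0 ++ [:: s] = rcons (rcons (nseq (size delta) 0) 0) s.
  by rewrite -!cats1 -addn1 nseqD -catA.
by rewrite -cat_rcons cats1 !iword_rcons ?size_rcons ?size_nseq.
Qed.

Lemma ext_D_ext_A (m a k : nat) (v : seq nat) : m.+1 = a + k -> size v = barm m ->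
  ext D m.+1 k (ext A m 0 v) = map S v ++ iota 1 a ++ rev (iota 1 m.+2) ++ iota (a + 2) k.
Proof.
move=> mak sizev.
have -> : ext A m 0 v = (map S v ++ iota 1 a) ++ iota a.+1 k.
  by rewrite /= -[v in ext_A _ _ v]cats0 ext_A_cat ?addn0 // cats0 mak iotaD add1n catA.
rewrite /= ext_D_cat ?size_iota ?map_succ_iota -?catA ?addn2 //.
by rewrite size_cat size_map sizev size_iota barmS; lia.
Qed.

Lemma ext_A_ext_D (m a k : nat) (v : seq nat) : m.+1 = a + k -> size v = barm m ->
  ext A m.+1 a (ext D m 0 v) = map S v ++ rev (iota (a + 2) k) ++ iota 1 m.+2 ++ rev (iota 1 a).
Proof.
move=> mak sizev.
have -> : ext D m 0 v = (v ++ rev (iota a.+1 k)) ++ rev (iota 1 a).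
  by rewrite /= -[v in ext_D _ _ v]cats0 ext_D_cat ?addn0 // cats0 mak iotaD add1n rev_cat catA.
rewrite /= ext_A_cat ?size_rev ?size_iota ?map_cat ?map_rev ?map_succ_iota -?catA ?addn2 //.
by rewrite size_cat sizev size_rev size_iota barmS; lia.
Qed.

Theorem lemma5p5 (n k : nat) (delta0 : seq AD) :
  2 <= n -> 0 < k -> k <= n - 1 -> size delta0 = n - 2 ->
  move_equiv (iword (delta0 ++ [:: A; D]) (nseq (n - 1) 0 ++ [:: k]))
             (iword (delta0 ++ [:: D; A]) (nseq (n - 1) 0 ++ [:: n - k - 1])).
Proof.
move=> le2n _ le_k_n sizedelta0.
have [a mak] : exists a, (size delta0).+1 = a + k by exists (n - 1 - k); lia.
have -> : n - 1 = (size delta0).+1 by lia.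
have -> : n - k - 1 = a by lia.
rewrite !iword_last2 (ext_D_ext_A mak) ?(ext_A_ext_D mak) ?size_iword ?size_nseq // mak.
have := move_equiv_cat2 (map S (iword delta0 (nseq (size delta0) 0))) [::]
  (move_equiv_up_down a k).
by rewrite !cats0.
Qed.
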